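(* In the contention game with $n=3$ players and $k=2$ channels under acknowledgement-based feedback, the anonymous protocol $f^2$ (in every slot, regardless of history, a pending player transmits on channel 1 with probability $1/2$ and on channel 2 with probability $1/2$, and never stays idle) is an equilibrium protocol, and the expected latency of each player under it is $8/3$.
   Context: Contention game: $n$ players, channel set $K=\{1,\dots,k\}$, discrete time slots $t=1,2,\dots$. Each player has one packet; initially all players are pending. In each slot a pending player chooses (possibly at random) an action in $A=\{0,1,\dots,k\}$, where $0$ means no transmission and $a\in K$ means transmitting on channel $a$. If exactly one player transmits on a channel in a slot, her transmission succeeds and she leaves the game; if two or more transmit on the same channel they collide, all fail and remain pending. $X_{i,t}$ is player $i$'s action at slot $t$ and $h_{i,t}=(X_{i,1},\dots,X_{i,t})$ her personal history. A protocol for player $i$ is a sequence of decision rules, the rule for slot $t$ mapping the information available to $i$ to a probability distribution on $A$. The latency $T_i$ of player $i$ is the slot in which she transmits successfully; each player wants to minimize her expected latency. Acknowledgement-based feedback: after a slot, only a player who attempted transmission learns whether she succeeded; decision rules depend only on the personal history $h_{i,t-1}$. A profile $(f_1,\dots,f_n)$ is an equilibrium if for every player $i$, every slot $t$ and every history, player $i$ cannot decrease her expected latency (conditional on that history) by unilaterally deviating to another protocol from $t$ on. An anonymous protocol is one used by all players whose decision rules do not depend on the player's identity; it is an equilibrium protocol if the profile in which all players use it is an equilibrium. *)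

From HB Require Import structures.
From mathcomp Require Import all_boot all_order all_algebra.
From mathcomp Require Import all_classical all_reals.
From mathcomp Require Import ereal sequences.
Set Implicit Arguments. Unset Strict Implicit. Unset Printing Implicit Defensive.
Import Order.TTheory GRing.Theory Num.Theory.
Local Open Scope ring_scope.

(* Actions A = 'I_k.+1 : 0 = no transmission, a >= 1 = transmit on channel a.
   Slots are 1,2,3,...; a finite sequence w of joint action profiles
   (w_0, w_1, ...) lists the actions in slots 1, 2, ....                *)

Section Contention.
Variables (R : realType) (n k : nat).

Definition action := 'I_k.+1.
Definition jprof := {ffun 'I_n -> action}.

(* A decision rule sequence (protocol) under acknowledgement-based feedback:
   maps the personal history h_{i,t-1} (a seq of own actions, whose length
   t-1 determines the slot t) to a probability distribution on actions. *)
Definition behavior := seq action -> action -> R.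

Definition is_protocol (b : behavior) : Prop :=
  forall hist, (forall a, 0 <= b hist a) /\ \sum_(a : action) b hist a = 1.

Definition succ (pend : 'I_n -> bool) (x : jprof) (j : 'I_n) : bool :=
  [&& pend j, x j != ord0 &
      [forall j' : 'I_n, (j' != j) ==> ~~ (pend j' && (x j' == x j))]].

Definition step (pend : 'I_n -> bool) (x : jprof) : 'I_n -> bool :=
  fun j => pend j && ~~ succ pend x j.

Definition pendAfter (w : seq jprof) : 'I_n -> bool :=
  foldl step (fun _ => true) w.

Definition phist (w : seq jprof) (j : 'I_n) : seq action := [seq (x : jprof) j | x <- w].

Definition slot_weight (F : 'I_n -> behavior) (pre : seq jprof) (x : jprof) : R :=
  \prod_(j < n) (if pendAfter pre j then F j (phist pre j) (x j)
                 else (x j == ord0)%:R).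

Definition x0 : jprof := [ffun => ord0].

Definition prob (F : 'I_n -> behavior) (w : seq jprof) : R :=
  \prod_(u < size w) slot_weight F (take u w) (nth x0 w u).

Definition probEv (F : 'I_n -> behavior) (N : nat) (E : seq jprof -> bool) : R :=
  \sum_(w : N.-tuple jprof) prob F w * (E w)%:R.

(* P(T_i > s) = P(i still pending after slots 1..s) *)
Definition tailP (F : 'I_n -> behavior) (i : 'I_n) (s : nat) : R :=
  probEv F s (fun w => pendAfter w i).

(* expected latency E[T_i] = sum_{s >= 0} P(T_i > s), in the extended reals *)
Definition expected_latency (F : 'I_n -> behavior) (i : 'I_n) : \bar R :=
  (\sum_(0 <= s <oo) (tailP F i s)%:E)%E.

(* expected latency of i conditional on the event H = "i is still pending at
   the start of slot m+1" (m = length of i's personal history):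
   E[T_i | H] = sum_{s >= 0} P(T_i > s /\ H) / P(H). *)
Definition cond_latency (F : 'I_n -> behavior) (i : 'I_n) (m : nat) : \bar R :=
  (\sum_(0 <= s <oo)
     ((probEv F (maxn s m)
         (fun w => pendAfter (take s w) i && pendAfter (take m w) i)
       / probEv F m (fun w => pendAfter w i))%:E))%E.

Definition deviate (F : 'I_n -> behavior) (i : 'I_n) (b : behavior) : 'I_n -> behavior :=
  fun j => if j == i then b else F j.

(* player i's past actions are fixed to the personal history h; from slot
   (size h).+1 on she follows the protocol g *)
Definition prefixed (h : seq action) (g : behavior) : behavior :=
  fun hist => if (size hist < size h)%N then (fun a => (a == nth ord0 h (size hist))%:R)
              else g hist.

(* equilibrium: for every player i, every slot t = (size h).+1 and every
   personal history h, no protocol g used from t on decreases i's expected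
   latency conditional on that history *)
Definition equilibrium (F : 'I_n -> behavior) : Prop :=
  forall (i : 'I_n) (h : seq action) (g : behavior), is_protocol g ->
    (cond_latency (deviate F i (prefixed h (F i))) i (size h)
     <= cond_latency (deviate F i (prefixed h g)) i (size h))%E.

Definition equilibrium_protocol (f : behavior) : Prop :=
  equilibrium (fun _ => f).

End Contention.

Definition f2 (R : realType) : behavior R 2 :=
  fun _ a => if a == ord0 then 0 else 2^-1.

From HB Require Import structures.
From mathcomp Require Import all_boot all_order all_algebra.
From mathcomp Require Import all_classical all_reals.
From mathcomp Require Import ereal sequences topology normedtype.
From mathcomp Require Import ring lra.
Import Order.TTheory GRing.Theory Num.Theory.
Local Open Scope ring_scope.
Set Implicit Arguments. Unset Strict Implicit. Unset Printing Implicit Defensive.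

(* Fix a player i facing two opponents who play f2, and let Phi(pend) be the expected
   remaining latency of i when all pending players use f2: 1, 2 or 8/3 when one, two or
   three players are pending, and 0 once i has left.  A finite check over the joint actions
   of a slot shows that, whatever distribution i uses in it, the expected value of Phi after
   the slot is at least Phi - 1, with equality when i does not stay idle.  Summing over the
   slots m < s <= N, the drop of E[Phi] is at most the sum of the P(T_i > s), with equality
   for f2; as Phi <= 8/3 on the event T_i > N, the expected latency of i conditional on her
   first m actions is at least m + E[Phi after m slots] / P(T_i > m) under any deviation,
   and equal to it under f2.  Both deviations share this value, since it only depends on the
   first m slots.  For m = 0 it is Phi(all pending) = 8/3. *)

Section Trajectories.
Variables (R : realType) (n k : nat).
Implicit Types (F : 'I_n -> behavior R k) (w : seq (jprof n k)) (x : jprof n k).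
Implicit Types (phi psi : seq (jprof n k) -> R) (b g : behavior R k) (h : seq (action k)).

Definition expectation F N (phi : seq (jprof n k) -> R) : R :=
  \sum_(t : N.-tuple (jprof n k)) prob F t * phi t.

Lemma prob_rcons F w x : prob F (rcons w x) = prob F w * slot_weight F w x.
Proof.
rewrite /prob size_rcons big_ord_recr /= -cats1 takel_cat // take_size.
rewrite nth_cat ltnn subnn; congr (_ * _); apply: eq_bigr => u _.
by rewrite takel_cat 1?ltnW // nth_cat ltn_ord.
Qed.

Lemma sum_tuple_rcons (T : finType) (V : nmodType) N (f : seq T -> V) :
  \sum_(t : N.+1.-tuple T) f t = \sum_(t : N.-tuple T) \sum_(y : T) f (rcons t y).
Proof.
rewrite pair_big (reindex (fun p : N.-tuple T * T => [tuple of rcons p.1 p.2])) //.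
exists (fun t : N.+1.-tuple T =>
          ([tuple of belast (thead t) (behead_tuple t)], last (thead t) (behead t))).
  move=> [[[|y s] /= ?] z] _; rewrite /= ?belast_rcons ?last_rcons; congr (_, _).
  - exact: val_inj.
  - by apply: val_inj; rewrite /= belast_rcons.
by move=> t _; apply: val_inj; rewrite /= -lastI (tuple_eta t).
Qed.

Lemma slot_weight_ge0 F w x : (forall j, is_protocol (F j)) -> 0 <= slot_weight F w x.
Proof.
move=> F_protocol; apply: prodr_ge0 => j _; case: ifP => // _.
by case: (F_protocol j (phist w j)).
Qed.

Lemma prob_ge0 F w : (forall j, is_protocol (F j)) -> 0 <= prob F w.
Proof. by move=> F_protocol; apply: prodr_ge0 => u _; exact: slot_weight_ge0. Qed.

Lemma pendAfter_rcons w x : pendAfter (rcons w x) = step (pendAfter w) x.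
Proof. by rewrite /pendAfter foldl_rcons. Qed.

Lemma pendAfter_cat w1 w2 j : pendAfter (w1 ++ w2) j -> pendAfter w1 j.
Proof.
rewrite /pendAfter foldl_cat; elim: w2 (foldl _ _ w1) => // x w2 IH pend /IH.
by case/andP.
Qed.

Lemma pendAfter_take w s j : pendAfter w j -> pendAfter (take s w) j.
Proof. by rewrite -{1}(cat_take_drop s w) => /pendAfter_cat. Qed.

Lemma expectation_succ F N phi :
  expectation F N.+1 phi =
  expectation F N (fun t => \sum_x slot_weight F t x * phi (rcons t x)).
Proof.
rewrite /expectation (sum_tuple_rcons _ (fun s => prob F s * phi s)); apply: eq_bigr => t _.
by rewrite mulr_sumr; apply: eq_bigr => x _; rewrite prob_rcons mulrA.
Qed.

Lemma expectation0 F phi : expectation F 0 phi = phi [::].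
Proof.
rewrite /expectation (big_pred1 [tuple]) => [|t]; last by rewrite [t]tuple0 /= eqxx.
by rewrite /prob big_ord0 mul1r.
Qed.

Lemma expectationB F N phi psi :
  expectation F N (fun t => phi t - psi t) = expectation F N phi - expectation F N psi.
Proof. by rewrite /expectation -sumrB; apply: eq_bigr => t _; rewrite mulrBr. Qed.

Lemma expectationZ F N c phi :
  expectation F N (fun t => c * phi t) = c * expectation F N phi.
Proof. by rewrite /expectation mulr_sumr; apply: eq_bigr => t _; rewrite mulrCA. Qed.

Lemma eq_expectation F N phi psi :
  (forall t : N.-tuple (jprof n k), phi t = psi t) -> expectation F N phi = expectation F N psi.
Proof. by move=> phi_psi; apply: eq_bigr => t _; rewrite phi_psi. Qed.

Lemma ler_expectation F N phi psi : (forall j, is_protocol (F j)) ->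
  (forall t : N.-tuple (jprof n k), phi t <= psi t) -> expectation F N phi <= expectation F N psi.
Proof.
by move=> F_protocol phi_psi; apply: ler_sum => t _; rewrite ler_wpM2l ?prob_ge0.
Qed.

Lemma expectation_ge0 F N phi : (forall j, is_protocol (F j)) ->
  (forall t : N.-tuple (jprof n k), 0 <= phi t) -> 0 <= expectation F N phi.
Proof. by move=> F_protocol phi_ge0; apply: sumr_ge0 => t _; rewrite mulr_ge0 ?prob_ge0. Qed.

Lemma probEvE F N E : probEv F N E = expectation F N (fun t => (E t)%:R).
Proof. by []. Qed.

Lemma prefixed_protocol h g : is_protocol g -> is_protocol (prefixed h g).
Proof.
move=> g_protocol hist; rewrite /prefixed; case: ifP => _; last exact: g_protocol.
split=> [a|]; first by rewrite ler0n.
by rewrite (bigD1 (nth ord0 h (size hist))) //= eqxx big1 ?addr0 // => a /negbTE ->.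
Qed.

Lemma deviate_protocol F i b : (forall j, is_protocol (F j)) -> is_protocol b ->
  forall j, is_protocol (deviate F i b j).
Proof. by move=> F_protocol b_protocol j; rewrite /deviate; case: (j == i). Qed.

Lemma expectation_deviate_prefixed F i h g1 g2 phi :
  expectation (deviate F i (prefixed h g1)) (size h) phi =
  expectation (deviate F i (prefixed h g2)) (size h) phi.
Proof.
apply: eq_bigr => t _; congr (_ * _); apply: eq_bigr => u _; apply: eq_bigr => j _.
rewrite /deviate; case: (j == i) => //.
have := ltn_ord u; rewrite [in X in (_ < X)%N]size_tuple => u_lt.
by rewrite /prefixed /phist size_map size_take ltn_ord u_lt.
Qed.

End Trajectories.

Section NonnegativeSeries.
Variable R : realType.
Implicit Types (a : nat -> R) (X c : R).

Lemma nneseries_le_partial_ub a X m : (forall s, 0 <= a s) ->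
  (forall N, (m <= N)%N -> \sum_(0 <= s < N) a s <= X) ->
  (\sum_(0 <= s <oo) (a s)%:E <= X%:E)%E.
Proof.
move=> a_ge0 partial_le; apply: lime_le.
  by apply: is_cvg_nneseries => s _ _; rewrite lee_fin.
by near=> N; rewrite sumEFin lee_fin; apply: partial_le; near: N; exists m.
Unshelve. all: by end_near.
Qed.

(* If the series were finite and smaller than X, then c * a N would stay above
   a positive constant, and the partial sums would be unbounded. *)
Lemma nneseries_ge_partial_lb a X c m : (forall s, 0 <= a s) ->
  (forall N, (m <= N)%N -> X - c * a N <= \sum_(0 <= s < N) a s) ->
  (X%:E <= \sum_(0 <= s <oo) (a s)%:E)%E.
Proof.
move=> a_ge0 partial_ge.
have series_ge0 : (0 <= \sum_(0 <= s <oo) (a s)%:E)%E.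
  by apply: nneseries_ge0 => s _ _; rewrite lee_fin.
case E : (\sum_(0 <= s <oo) (a s)%:E)%E series_ge0 => [l| |//] _; last exact: leey.
have partial_le N : \sum_(0 <= s < N) a s <= l.
  by rewrite -lee_fin -E -sumEFin; apply: nneseries_lim_ge => s _ _; rewrite lee_fin.
rewrite lee_fin leNgt; apply/negP => l_lt_X.
set d := X - l.
have d_gt0 : 0 < d by rewrite subr_gt0.
have d_le N : (m <= N)%N -> d <= c * a N.
  by move=> mN; have := partial_ge N mN; have := partial_le N; rewrite /d; lra.
have c_gt0 : 0 < c.
  rewrite ltNge; apply/negP => c_le0.
  have := mulr_le0_ge0 c_le0 (a_ge0 m); have := d_le m (leqnn m); lra.
pose M := (Num.truncn (l * c / d)).+1.
have : M%:R * (d / c) <= l.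
  apply: le_trans (partial_le (m + M)%N).
  rewrite (big_cat_nat (leq0n m) (leq_addr M m)) /= -[X in X <= _]add0r lerD //.
    by apply: sumr_ge0 => s _.
  rewrite -[M in M%:R](addKn m) mulr_natl -sumr_const_nat; apply: ler_sum_nat => s /andP [ms _].
  by rewrite ler_pdivrMr // mulrC d_le.
rewrite -ler_pdivlMr ?divr_gt0 // invf_div mulrA.
by have := truncnS_gt (l * c / d); rewrite -/M; lra.
Qed.

End NonnegativeSeries.

Notation jp := (jprof 3 2).

Section ThreePlayers.
Local Open Scope nat_scope.

Definition i0 : 'I_3 := ord0.
Definition i1 : 'I_3 := @Ordinal 3 1 isT.
Definition i2 : 'I_3 := @Ordinal 3 2 isT.
Definition ords3 : seq 'I_3 := [:: i0; i1; i2].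

Definition fun3 (T : Type) (y0 y1 y2 : T) : 'I_3 -> T :=
  fun j => if j == i0 then y0 else if j == i1 then y1 else y2.

Lemma ord3P (j : 'I_3) : [\/ j = i0, j = i1 | j = i2].
Proof.
case: j => [[|[|[|m]]] lt_j3]; [constructor 1|constructor 2|constructor 3|by []]; exact: val_inj.
Qed.

Lemma mem_ords3 (j : 'I_3) : j \in ords3.
Proof. by case: (ord3P j) => ->. Qed.

Lemma fun3_eta (T : Type) (f : 'I_3 -> T) : f = fun3 (f i0) (f i1) (f i2).
Proof. by apply: funext => j; case: (ord3P j) => ->. Qed.

Lemma big_ord3 (T : Type) (idx : T) (op : T -> T -> T) (F : 'I_3 -> T) :
  \big[op/idx]_(j < 3) F j = op (F i0) (op (F i1) (op (F i2) idx)).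
Proof. by rewrite !big_ord_recl big_ord0; congr (op _ (op _ (op _ _))); congr F; exact: val_inj. Qed.

Lemma sum_jprof3 (V : nmodType) (G : ('I_3 -> 'I_3) -> V) :
  (\sum_(x : jp) G x = \sum_(a0 < 3) \sum_(a1 < 3) \sum_(a2 < 3) G (fun3 a0 a1 a2))%R.
Proof.
rewrite pair_big pair_big /=.
rewrite (reindex (fun p : 'I_3 * 'I_3 * 'I_3 => [ffun j => fun3 p.1.1 p.1.2 p.2 j] : jp)).
  by apply: eq_bigr => -[[a0 a1] a2] _; congr G; apply: funext => j; rewrite ffunE.
exists (fun x : jp => (x i0, x i1, x i2)) => [[[a0 a1] a2] _|x _]; first by rewrite !ffunE.
by apply/ffunP => j; rewrite ffunE; case: (ord3P j) => ->.
Qed.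

(* [succ] and [step] evaluated by list operations, so that they reduce under [vm_compute]. *)
Definition succ3 (pend : 'I_3 -> bool) (x : 'I_3 -> 'I_3) (j : 'I_3) : bool :=
  [&& pend j, x j != ord0 & all (fun j' => (j' != j) ==> ~~ (pend j' && (x j' == x j))) ords3].

Definition step3 (pend : 'I_3 -> bool) (x : 'I_3 -> 'I_3) : 'I_3 -> bool :=
  fun j => pend j && ~~ succ3 pend x j.

Lemma step3E (pend : 'I_3 -> bool) (x : jp) : step pend x = step3 pend x.
Proof.
apply: funext => j; rewrite /step /step3 /succ /succ3; congr (_ && ~~ [&& _, _ & _]).
by apply/forallP/allP => [all_j j' _|all_j j']; [exact: all_j | exact: all_j (mem_ords3 j')].
Qed.

(* Everything is scaled to be an integer: [potential6 i pend] is six times the expected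
   remaining latency of a pending player [i] when all pending players use f2, namely 1, 2
   and 8/3 with 0, 1 and 2 other pending players; [weight2 pend j a] is twice the
   probability that [j <> i] plays [a]; hence [next_potential24 i pend a] is 24 times the
   expected potential after a slot in which [i] plays [a]. *)
Definition potential6 (i : 'I_3) (pend : 'I_3 -> bool) : nat :=
  if pend i then
    match count (fun j => (j != i) && pend j) ords3 with 0 => 6 | 1 => 12 | _ => 16 end
  else 0.

Definition weight2 (pend : 'I_3 -> bool) (j a : 'I_3) : nat :=
  if pend j then nat_of_bool (a != ord0) else 2 * (a == ord0).

Definition outcome24 (i : 'I_3) (pend : 'I_3 -> bool) (x : 'I_3 -> 'I_3) : nat :=
  foldr muln 1 [seq weight2 pend j (x j) | j <- ords3 & j != i] * potential6 i (step3 pend x).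

Definition next_potential24 (i : 'I_3) (pend : 'I_3 -> bool) (a : 'I_3) : nat :=
  sumn [seq sumn [seq sumn [seq if fun3 a0 a1 a2 i == a then outcome24 i pend (fun3 a0 a1 a2) else 0
                           | a2 <- ords3] | a1 <- ords3] | a0 <- ords3].

Lemma next_potential24_table :
  all (fun i => all (fun b0 => all (fun b1 => all (fun b2 => all (fun a =>
    let pend := fun3 b0 b1 b2 in
    pend i ==> (4 * potential6 i pend <= next_potential24 i pend a + 24) &&
               ((a != ord0) ==> (next_potential24 i pend a + 24 == 4 * potential6 i pend)))
  ords3) [:: true; false]) [:: true; false]) [:: true; false]) ords3.
Proof. by vm_compute. Qed.

Lemma next_potential24_bounds (i : 'I_3) (pend : 'I_3 -> bool) (a : 'I_3) : pend i ->
  4 * potential6 i pend <= next_potential24 i pend a + 24 /\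
  (a != ord0 -> next_potential24 i pend a + 24 = 4 * potential6 i pend).
Proof.
have bools (b : bool) : b \in [:: true; false] by case: b.
move: next_potential24_table => /allP /(_ i (mem_ords3 i)).
move=> /allP /(_ _ (bools (pend i0))) /allP /(_ _ (bools (pend i1))) /allP /(_ _ (bools (pend i2))).
move=> /allP /(_ a (mem_ords3 a)) /=; rewrite -fun3_eta => /implyP table_i pend_i.
by have /andP [-> /implyP eq_a] := table_i pend_i; split=> // /eq_a /eqP.
Qed.

End ThreePlayers.

Lemma f2_protocol (R : realType) : is_protocol (f2 R).
Proof.
move=> h; split=> [a|]; first by rewrite /f2; case: ifP => // _; rewrite invr_ge0 ler0n.
by rewrite big_ord3 /f2 /=; lra.
Qed.

Section OneSlot.
Variables (R : realType) (i : 'I_3).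
Implicit Types (pend : 'I_3 -> bool) (p : 'I_3 -> R) (x : 'I_3 -> 'I_3).

Definition potential pend : R := (potential6 i pend)%:R / 6.

Definition dev_slot_weight pend p x : R :=
  \prod_(j < 3) (if pend j then (if j == i then p (x j) else f2 R [::] (x j))
                 else (x j == ord0)%:R).

Lemma f2_weight2 pend (j a : 'I_3) :
  (if pend j then f2 R [::] a else (a == ord0)%:R) = (weight2 pend j a)%:R / 2.
Proof. by rewrite /f2 /weight2; case: (pend j); case: (a == ord0); rewrite /= ?natrM; field. Qed.

Lemma dev_slot_weightE pend p x : pend i ->
  dev_slot_weight pend p x * potential (step3 pend x) = p (x i) * (outcome24 i pend x)%:R / 24.
Proof.
move=> pend_i; rewrite /dev_slot_weight /potential /outcome24 big_ord3.
by case: (ord3P i) pend_i => -> pend_i; rewrite /= pend_i !f2_weight2 !natrM /=; field.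
Qed.

Lemma next_potential24_ge pend a : pend i ->
  potential pend - 1 <= (next_potential24 i pend a)%:R / 24.
Proof.
move=> /(next_potential24_bounds a) [+ _]; rewrite -(ler_nat R) natrD natrM /potential.
by lra.
Qed.

Lemma next_potential24_eq pend a : pend i -> a != ord0 ->
  (next_potential24 i pend a)%:R / 24 = potential pend - 1.
Proof.
move=> /(next_potential24_bounds a) [_ eq_a] /eq_a /(congr1 (fun m => m%:R : R)).
by rewrite natrD natrM /potential; lra.
Qed.

Lemma natr_sumn_ords3 (F : 'I_3 -> nat) :
  (sumn [seq F j | j <- ords3])%:R = \sum_(j < 3) (F j)%:R :> R.
Proof. by rewrite big_ord3 /= !natrD addr0. Qed.

Lemma next_potential24E pend a :
  (next_potential24 i pend a)%:R = \sum_(x : jp | x i == a) (outcome24 i pend x)%:R :> R.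
Proof.
rewrite big_mkcond (sum_jprof3 (fun x => if x i == a then (outcome24 i pend x)%:R else 0)).
rewrite /next_potential24 natr_sumn_ords3; apply: eq_bigr => a0 _.
rewrite natr_sumn_ords3; apply: eq_bigr => a1 _.
by rewrite natr_sumn_ords3; apply: eq_bigr => a2 _; case: ifP.
Qed.

Lemma next_potentialE pend p : pend i ->
  \sum_(x : jp) dev_slot_weight pend p x * potential (step pend x) =
  \sum_(a < 3) p a * ((next_potential24 i pend a)%:R / 24).
Proof.
move=> pend_i; under eq_bigr do rewrite step3E dev_slot_weightE //.
under [RHS]eq_bigr do rewrite next_potential24E mulr_suml mulr_sumr.
rewrite (partition_big (fun x : jp => x i) predT) //; apply: eq_bigr => a _.
by apply: eq_big => [x|x /eqP <-]; rewrite ?mulrA.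
Qed.

Lemma potential_unpending pend : ~~ pend i -> potential pend = 0.
Proof. by rewrite /potential /potential6 => /negbTE ->; rewrite mul0r. Qed.

Lemma next_potential_unpending pend p : ~~ pend i ->
  \sum_(x : jp) dev_slot_weight pend p x * potential (step pend x) = 0.
Proof.
move=> pend_i; apply: big1 => x _.
by rewrite potential_unpending ?mulr0 // /step negb_and pend_i.
Qed.

Lemma next_potential_ge pend p : (forall a, 0 <= p a) -> \sum_a p a = 1 ->
  potential pend - (pend i)%:R <= \sum_(x : jp) dev_slot_weight pend p x * potential (step pend x).
Proof.
move=> p_ge0 p_sum1; have [pend_i|/negbTE pend_i] := boolP (pend i); last first.
  by rewrite next_potential_unpending ?pend_i // potential_unpending ?pend_i // subr0.
rewrite next_potentialE // mulr1n -[_ - 1]mul1r -[X in X * _ <= _]p_sum1 mulr_suml.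
by apply: ler_sum => a _; apply: ler_wpM2l => //; exact: next_potential24_ge.
Qed.

Lemma next_potential_eq pend p : \sum_a p a = 1 -> p ord0 = 0 ->
  \sum_(x : jp) dev_slot_weight pend p x * potential (step pend x) = potential pend - (pend i)%:R.
Proof.
move=> p_sum1 p_idle; have [pend_i|/negbTE pend_i] := boolP (pend i); last first.
  by rewrite next_potential_unpending ?pend_i // potential_unpending ?pend_i // subr0.
rewrite next_potentialE // mulr1n -[RHS]mul1r -[X in _ = X * _]p_sum1 mulr_suml.
apply: eq_bigr => a _.
by have [->|a_busy] := eqVneq a ord0; rewrite ?p_idle ?mul0r // next_potential24_eq.
Qed.

Lemma potential_bounds pend : 0 <= potential pend <= 8 / 3 * (pend i)%:R.
Proof.
rewrite /potential /potential6; case: (pend i); last by rewrite !mul0r mulr0 lexx.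
by rewrite mulr1n; case: count => [|[|?]]; apply/andP; split; lra.
Qed.

End OneSlot.

Section Deviation.
Variables (R : realType) (i : 'I_3).
Notation beh := (behavior R 2).
Implicit Types (b : beh) (m N : nat).

Definition dev b : 'I_3 -> beh := deviate (fun _ => f2 R) i b.

Definition tail b N : R := tailP (dev b) i N.

Definition expected_potential b N : R :=
  expectation (dev b) N (fun t => potential R i (pendAfter t)).

Definition cond_latency_series b m : \bar R :=
  (\sum_(0 <= s <oo) (tail b (maxn s m) / tail b m)%:E)%E.

Lemma dev_protocol b : is_protocol b -> forall j, is_protocol (dev b j).
Proof. by move=> b_protocol; apply: deviate_protocol => // j; exact: f2_protocol. Qed.

Lemma slot_weight_dev b w x :
  slot_weight (dev b) w x = dev_slot_weight i (pendAfter w) (b (phist w i)) x.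
Proof.
apply: eq_bigr => j _; rewrite /dev /deviate.
by case: (pendAfter w j) => //; case: eqVneq => [->|].
Qed.

Lemma tail_ge0 b N : is_protocol b -> 0 <= tail b N.
Proof.
move=> b_protocol; rewrite /tail /tailP probEvE.
by apply: expectation_ge0 => [|t]; [exact: dev_protocol | exact: ler0n].
Qed.

Lemma expected_potential_ge0 b N : is_protocol b -> 0 <= expected_potential b N.
Proof.
move=> b_protocol; apply: expectation_ge0 => [|t]; first exact: dev_protocol.
by case/andP: (potential_bounds R i (pendAfter t)).
Qed.

Lemma expected_potential_le_tail b N : is_protocol b -> expected_potential b N <= 8 / 3 * tail b N.
Proof.
move=> b_protocol; rewrite /tail /tailP probEvE -expectationZ.
apply: ler_expectation => [|t]; first exact: dev_protocol.
by case/andP: (potential_bounds R i (pendAfter t)).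
Qed.

Lemma expected_potential_succ b N : expected_potential b N.+1 =
  expectation (dev b) N (fun t => \sum_(x : jp)
    dev_slot_weight i (pendAfter t) (b (phist t i)) x * potential R i (step (pendAfter t) x)).
Proof.
rewrite /expected_potential expectation_succ; apply: eq_expectation => t.
by apply: eq_bigr => x _; rewrite slot_weight_dev pendAfter_rcons.
Qed.

Lemma expected_potential_succ_ge b N : is_protocol b ->
  expected_potential b N - tail b N <= expected_potential b N.+1.
Proof.
move=> b_protocol; rewrite expected_potential_succ /tail /tailP probEvE -expectationB.
apply: ler_expectation => [|t]; first exact: dev_protocol.
by have [p_ge0 p_sum1] := b_protocol (phist t i); exact: next_potential_ge.
Qed.

Lemma expected_potential_succ_eq b N : is_protocol b ->
  (forall h, size h = N -> b h ord0 = 0) ->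
  expected_potential b N.+1 = expected_potential b N - tail b N.
Proof.
move=> b_protocol b_busy; rewrite expected_potential_succ /tail /tailP probEvE -expectationB.
apply: eq_expectation => t; have [_ p_sum1] := b_protocol (phist t i).
by apply: next_potential_eq => //; apply: b_busy; rewrite size_map size_tuple.
Qed.

Lemma expected_potential_drop_le b m N : is_protocol b -> (m <= N)%N ->
  expected_potential b m - expected_potential b N <= \sum_(m <= s < N) tail b s.
Proof.
move=> b_protocol mN; rewrite -opprB -(telescope_sumr _ mN) -sumrN.
by apply: ler_sum_nat => s _; have := expected_potential_succ_ge s b_protocol; lra.
Qed.

Lemma expected_potential_drop b m N : is_protocol b ->
  (forall h, (m <= size h)%N -> b h ord0 = 0) -> (m <= N)%N ->
  expected_potential b m - expected_potential b N = \sum_(m <= s < N) tail b s.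
Proof.
move=> b_protocol b_busy mN; rewrite -opprB -(telescope_sumr _ mN) -sumrN.
apply: eq_big_nat => s /andP [ms _].
by rewrite (expected_potential_succ_eq b_protocol) => [|h h_size]; [lra | rewrite b_busy ?h_size].
Qed.

Lemma cond_latency_dev b m : cond_latency (dev b) i m = cond_latency_series b m.
Proof.
apply: eq_eseriesr => s _; congr ((_ / _)%:E).
apply: eq_bigr => t _; congr (_ * (nat_of_bool _)%:R).
have [sm|] := boolP (s <= m)%N; last rewrite -ltnNge => ms.
  have t_size : size t = m by rewrite size_tuple (maxn_idPr sm).
  rewrite [take m t]take_oversize ?t_size //.
  by case: (boolP (pendAfter t i)) => [/pendAfter_take ->|]; rewrite ?andbF.
have t_size : size t = s by rewrite size_tuple (maxn_idPl (ltnW ms)).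
rewrite [take s t]take_oversize ?t_size //.
by case: (boolP (pendAfter t i)) => [/pendAfter_take ->|]; rewrite ?andbF.
Qed.

Lemma cond_latency_partial_sum b m N : (m <= N)%N -> tail b m != 0 ->
  \sum_(0 <= s < N) tail b (maxn s m) / tail b m =
  m%:R + (\sum_(m <= s < N) tail b s) / tail b m.
Proof.
move=> mN tail_neq0; rewrite (big_cat_nat (leq0n m) mN) /= mulr_suml; congr (_ + _).
  rewrite big_nat_cond (eq_bigr (fun _ => 1)) => [|s /andP [/andP [_ sm] _]].
    by rewrite -big_nat_cond sumr_const_nat subn0.
  by rewrite (maxn_idPr (ltnW sm)) divff.
rewrite big_nat_cond [RHS]big_nat_cond; apply: eq_bigr => s /andP [/andP [ms _] _].
by rewrite (maxn_idPl ms).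
Qed.

Lemma cond_latency_series_ge b m : is_protocol b -> 0 < tail b m ->
  ((m%:R + expected_potential b m / tail b m)%:E <= cond_latency_series b m)%E.
Proof.
move=> b_protocol tail_gt0.
apply: (nneseries_ge_partial_lb (c := 8 / 3) (m := m)) => [s|N mN].
  by rewrite divr_ge0 ?tail_ge0.
rewrite cond_latency_partial_sum ?gt_eqF // (maxn_idPl mN) -addrA lerD2l mulrA -mulrBl.
rewrite ler_pM2r ?invr_gt0 //.
have := expected_potential_drop_le b_protocol mN.
have := expected_potential_le_tail N b_protocol; lra.
Qed.

Lemma cond_latency_series_le b m : is_protocol b ->
  (forall h, (m <= size h)%N -> b h ord0 = 0) -> 0 < tail b m ->
  (cond_latency_series b m <= (m%:R + expected_potential b m / tail b m)%:E)%E.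
Proof.
move=> b_protocol b_busy tail_gt0.
apply: (nneseries_le_partial_ub (m := m)) => [s|N mN]; first by rewrite divr_ge0 ?tail_ge0.
rewrite cond_latency_partial_sum ?gt_eqF // -expected_potential_drop // lerD2l.
by rewrite ler_pM2r ?invr_gt0 // gerBl expected_potential_ge0.
Qed.

End Deviation.

Section Equilibrium.
Variable R : realType.

Lemma f2_equilibrium : @equilibrium_protocol R 3 2 (f2 R).
Proof.
move=> i h g g_protocol; rewrite !cond_latency_dev.
set m := size h; set bf := prefixed h (f2 R); set bg := prefixed h g.
have bf_protocol : is_protocol bf by apply: prefixed_protocol; exact: f2_protocol.
have bg_protocol : is_protocol bg by exact: prefixed_protocol.
have tail_eq : tail i bg m = tail i bf m.
  by rewrite /tail /tailP !probEvE; exact: expectation_deviate_prefixed.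
have pot_eq : expected_potential i bg m = expected_potential i bf m.
  exact: expectation_deviate_prefixed.
have [tail0|tail_gt0] := eqVneq (tail i bf m) 0.
  (* a history of probability 0: since x / 0 = 0, the left-hand series vanishes *)
  rewrite /cond_latency_series tail0 eseries0 => [|s _ _]; last by rewrite invr0 mulr0.
  by apply: nneseries_ge0 => s _ _; rewrite lee_fin divr_ge0 ?tail_ge0.
have {}tail_gt0 : 0 < tail i bf m by rewrite lt_def tail_gt0 tail_ge0.
apply: le_trans (cond_latency_series_le _ _ _) _ => //.
  by move=> h' hh'; rewrite /bf /prefixed ltnNge hh' /f2.
by rewrite -tail_eq -pot_eq cond_latency_series_ge // tail_eq.
Qed.

Lemma f2_expected_latency (i : 'I_3) : expected_latency (fun _ => f2 R) i = (8 / 3 : R)%:E.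
Proof.
have tail0 : tail i (f2 R) 0 = 1 by rewrite /tail /tailP probEvE expectation0.
have potential0 : expected_potential i (f2 R) 0 = 8 / 3.
  by rewrite /expected_potential expectation0 /potential /potential6; case: (ord3P i) => -> /=; lra.
have -> : expected_latency (fun _ => f2 R) i = cond_latency_series i (f2 R) 0.
  rewrite /cond_latency_series tail0; apply: eq_eseriesr => s _; rewrite maxn0 divr1.
  by congr (tailP _ _ _)%:E; apply: funext => j; rewrite /dev /deviate; case: eqP.
have -> : (8 / 3 : R)%:E = (0%:R + expected_potential i (f2 R) 0 / tail i (f2 R) 0)%:E.
  by rewrite potential0 tail0 add0r divr1.
have tail0_gt0 : 0 < tail i (f2 R) 0 by rewrite tail0.
have f2_busy h : (0 <= size h)%N -> f2 R h ord0 = 0 by rewrite /f2.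
have f2P := f2_protocol R.
by apply/eqP; rewrite eq_le cond_latency_series_le ?cond_latency_series_ge.
Qed.

End Equilibrium.

Theorem theorem1 (R : realType) :
  is_protocol (f2 R) /\
  @equilibrium_protocol R 3 2 (f2 R) /\
  (forall i : 'I_3, expected_latency (fun _ => f2 R) i = ((8 / 3 : R)%:E)%E).
Proof. by split; [exact: f2_protocol | split; [exact: f2_equilibrium | exact: f2_expected_latency]]. Qed.
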